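(* Let $\mathfrak g$ be of type $B_n$ and $J\subseteq I$. Then for $s\ge1$, $\mathbf A_{s,J}=\mathbf A^{1,1}_{s,J}\sqcup\mathbf A^{1,2}_{s,J}\sqcup\mathbf A^{2}_{s,J}$ where $$\mathbf A^{1,1}_{s,J}=\{\{\beta_{i_k,j_k}\}_{1\le k\le s}\in\mathbf A^1_s:\ i_k,j_k\notin J\ \forall k\},$$ $$\mathbf A^{1,2}_{s,J}=\{\{\beta_{i_k,j_k}\}_{1\le k\le s}\in\mathbf A^1_s:\ \{\beta_{i_k,j_k}\}_{1\le k\le s-1}\in\mathbf A^{1,1}_{s-1,J},\ i_s\in J,\ j_s=i_s+1\notin J\},$$ and, if $1\notin J$, $$\mathbf A^{2}_{s,J}=\{\{\alpha_{1,\ell}\}\cup\{\beta_{i_k,j_k}\}_{1\le k\le s-1}\in\mathbf A^2_s:\ \ell\notin J,\ \{\beta_{i_k,j_k}\}_{1\le k\le s-1}\in\mathbf A^{1,1}_{s-1,J}\sqcup\mathbf A^{1,2}_{s-1,J}\},$$ while $\mathbf A^2_{s,J}=\emptyset$ if $1\in J$.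
   Context: Simple roots $\alpha_1,\dots,\alpha_n$ of $B_n$ numbered as in Bourbaki, $I=\{1,\dots,n\}$; $\alpha_{i,j}=\alpha_i+\dots+\alpha_j$ ($i\le j$), $\beta_{k,\ell}=\alpha_{k,n}+\alpha_{\ell,n}$ ($k<\ell$), $\theta=\beta_{1,2}$. $\mathbf A^1_s=\{\{\beta_{i_k,j_k}\}_{1\le k\le s}: i_1<\dots<i_s<j_s<\dots<j_1\}$ and $\mathbf A^2_s=\{\{\alpha_{1,\ell}\}\cup\{\beta_{i_k,j_k}\}_{1\le k\le s-1}: \{\beta_{i_k,j_k}\}\in\mathbf A^1_{s-1},\ i_1>1,\ j_1\le\ell\}$; these together are all abelian antichains with $s$ elements. For $\eta=\sum_i d_i(\eta)\alpha_i$, $R^+(J)=\{\alpha\in R^+:d_i(\alpha)=0\ \forall i\notin J\}$. A $J$-antichain is a subset $A\subseteq R^+$ with $A\cap R^+(J)=\emptyset$, distinct elements pairwise incomparable (order: $\lambda\le\mu$ iff $\mu-\lambda$ is a nonnegative integer combination of simple roots), and $\alpha-\alpha_j\notin R$ for $\alpha\in A$, $j\in J$. $\Phi(A)=\{\alpha\in R^+:\alpha\ge\beta$ for some $\beta\in A\}$; $A$ is abelian if $\beta_1+\beta_2\notin R$ for all $\beta_1,\beta_2\in\Phi(A)$. $\mathbf A_{s,J}$ is the set of abelian $J$-antichains with $s$ elements; for $s=0$ the sets $\mathbf A^{1,1}_{0,J}$ consist of the empty antichain and $\mathbf A^{1,2}_{0,J}=\emptyset$. *)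

From HB Require Import structures.
From mathcomp Require Import all_boot all_order all_algebra.
Set Implicit Arguments. Unset Strict Implicit. Unset Printing Implicit Defensive.
Import Order.TTheory GRing.Theory Num.Theory.
Local Open Scope ring_scope.

(* Elements of the root lattice of B_n, written in the basis of simple roots:
   v i = d_{i+1}(v)  (ordinal i : 'I_n stands for the Bourbaki index i+1). *)
Definition vec (n : nat) := {ffun 'I_n -> int}.

Definition alpha (n i j : nat) : vec n :=
  [ffun k : 'I_n => if ((i <= k.+1) && (k.+1 <= j))%N then 1 else 0].

Definition beta (n k l : nat) : vec n := alpha n k n + alpha n l n.

Definition simple (n : nat) (j : 'I_n) : vec n := alpha n j.+1 j.+1.

Definition posroots (n : nat) : seq (vec n) :=
  [seq alpha n i j | i <- iota 1 n, j <- iota i (n - i).+1] ++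
  [seq beta n k l | k <- iota 1 n, l <- iota k.+1 (n - k)].

Definition roots (n : nat) : seq (vec n) :=
  posroots n ++ map (fun v => - v) (posroots n).

(* lambda <= mu iff mu - lambda ii a nonnegative integer combination of simple roots *)
Definition rle (n : nat) (u v : vec n) : bool := [forall i, u i <= v i].

Definition inJ (n : nat) (J : {set 'I_n}) (i : nat) : bool :=
  [exists k in J, k.+1 == i]%N.

Definition inRJ (n : nat) (J : {set 'I_n}) (a : vec n) : bool :=
  (a \in posroots n) && [forall i, (i \notin J) ==> (a i == 0)].

Definition J_antichain (n : nat) (J : {set 'I_n}) (A : seq (vec n)) : Prop :=
  [/\ {subset A <= posroots n},
      (forall a, a \in A -> ~~ inRJ J a),
      (forall a b, a \in A -> b \in A -> a != b -> ~~ rle a b) &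
      (forall a j, a \in A -> j \in J -> (a - simple j) \notin roots n)].

Definition Phi (n : nat) (A : seq (vec n)) : seq (vec n) :=
  [seq a <- posroots n | has (fun b => rle b a) A].

Definition abelian_set (n : nat) (A : seq (vec n)) : Prop :=
  forall b1 b2, b1 \in Phi A -> b2 \in Phi A -> (b1 + b2) \notin roots n.

Definition inAsJ (n : nat) (J : {set 'I_n}) (s : nat) (A : seq (vec n)) : Prop :=
  [/\ uniq A, size A = s, J_antichain J A & abelian_set A].

(* index data (i_1,..,i_s), (j_1,..,j_s) with 1 <= i_1<..<i_s<j_s<..<j_1 <= n *)
Definition chain1 (n s : nat) (ii jj : seq nat) : bool :=
  [&& size ii == s, size jj == s, sorted ltn (ii ++ rev jj)
    & all (fun x => (1 <= x <= n)%N) (ii ++ jj)].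

Definition betas (n : nat) (ii jj : seq nat) : seq (vec n) :=
  [seq beta n x.1 x.2 | x <- zip ii jj].

Definition inA1 (n s : nat) (A : seq (vec n)) : Prop :=
  exists ii jj, chain1 n s ii jj /\ A =i betas n ii jj.

Definition cond11 (n : nat) (J : {set 'I_n}) (ii jj : seq nat) : bool :=
  all (fun x => ~~ inJ J x) (ii ++ jj).

Definition cond12 (n : nat) (J : {set 'I_n}) (s : nat) (ii jj : seq nat) : bool :=
  [&& (0 < s)%N, cond11 J (take s.-1 ii) (take s.-1 jj),
      inJ J (last 0%N ii), last 0%N jj == (last 0%N ii).+1
    & ~~ inJ J (last 0%N jj)].

Definition inA11 (n : nat) (J : {set 'I_n}) (s : nat) (A : seq (vec n)) : Prop :=
  exists ii jj, [/\ chain1 n s ii jj, A =i betas n ii jj & cond11 J ii jj].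

Definition inA12 (n : nat) (J : {set 'I_n}) (s : nat) (A : seq (vec n)) : Prop :=
  exists ii jj, [/\ chain1 n s ii jj, A =i betas n ii jj & cond12 J s ii jj].

Definition inA2 (n s : nat) (A : seq (vec n)) : Prop :=
  exists l ii jj, [/\ (0 < s)%N, (1 <= l <= n)%N, chain1 n s.-1 ii jj,
    (0 < s.-1)%N ==> ((1 < head 0 ii) && (head 0 jj <= l))%N
    & A =i alpha n 1 l :: betas n ii jj].

Definition inA2J (n : nat) (J : {set 'I_n}) (s : nat) (A : seq (vec n)) : Prop :=
  ~~ inJ J 1 /\
  exists l ii jj, [/\ (0 < s)%N, (1 <= l <= n)%N, chain1 n s.-1 ii jj,
    (0 < s.-1)%N ==> ((1 < head 0 ii) && (head 0 jj <= l))%N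
    & A =i alpha n 1 l :: betas n ii jj] /\
    ~~ inJ J l /\ (cond11 J ii jj || cond12 J s.-1 ii jj).

From Pilot Require Import Defs.
From HB Require Import structures.
From mathcomp Require Import all_boot all_order all_algebra zify.
(* Re-import the definitions so that [roots] denotes the root system of B_n
   rather than the homonymous notion of fingraph. *)
Import Defs.
Set Implicit Arguments. Unset Strict Implicit. Unset Printing Implicit Defensive.
Import Order.TTheory GRing.Theory Num.Theory.

(* Roots are handled through their coordinates in the basis of simple roots.
   Every root is +-alpha_{i,j} or +-beta_{i,j}, so each coordinate statement about
   explicit roots is a finite case analysis closed by [lia] (tactic [coord]).

   A is an abelian J-antichain iff
      its elements are admissible roots -- alpha_{1,l} with 1, l outside J, or
      beta_{i,j} with j outside J and j = i + 1 whenever i is in J -- which are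
      pairwise incomparable, and every beta_{i,j} of A satisfies j <= l when
      alpha_{1,l} is in A.  The other roots are excluded because subtracting a
      simple root alpha_m, m in J, gives a root, or because two roots above A add
      up to a root; conversely, minimality follows from coordinate patterns of
      roots and commutativity from a coordinate where two elements of A sum
      beyond any root (abelian_of_excess).
   2. Index combinatorics.  Two incomparable beta's have strictly nested index
      pairs; sorting the pairs yields the chains i_1 < .. < i_s < j_s < .. < j_1
      of A^1_s (sorted_nested, nested_sort), and admissibility of all pairs of a
      chain is exactly the condition defining A^{1,1} or A^{1,2}
      (cond_admissible).
   3. The theorem combines 1 and 2 in both directions; disjointness of the three
      families follows from injectivity of beta and alpha_{1,l} <> beta_{i,j}. *)

Lemma ord_of n x : 0 < x <= n -> exists k : 'I_n, k.+1 = x.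
Proof. by case: x => // x /andP [_ lt_xn]; exists (Ordinal lt_xn). Qed.

(* The largest coefficient of a root at alpha_{k+1}: 1 for k = 0, 2 otherwise. *)
Definition coord_bound (k : nat) : int := if k == 0 then 1%R else 2%R.

(* Add the bound k < n for every ordinal k occurring in the goal. *)
Ltac ord_bounds := repeat match goal with |- context [@nat_of_ord ?m ?k] =>
  lazymatch goal with _ : is_true (leq (S (nat_of_ord k)) m) |- _ => fail
  | _ => have := ltn_ord k; intro end end.

(* Decide a statement about finitely many coordinates of explicit vectors. *)
Ltac coord := rewrite /beta /simple /coord_bound ?ffunE /=; ord_bounds;
  repeat (case: ifP => ?); try apply/eqP; lia.

Lemma posrootsP n (v : vec n) : reflect
  ((exists i j, [/\ 0 < i, i <= j <= n & v = alpha n i j]) \/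
   (exists i j, [/\ 0 < i, i < j <= n & v = beta n i j]))
  (v \in posroots n).
Proof.
apply: (iffP idP); rewrite mem_cat.
  case/orP=> /allpairsPdep [i [j [+ + ->]]]; rewrite !mem_iota => Hi Hj.
    by left; exists i, j; split=> //; lia.
  by right; exists i, j; split=> //; lia.
case=> -[i [j [Hi Hj ->]]]; apply/orP; [left|right]; apply/allpairsPdep;
  by exists i, j; rewrite !mem_iota; split=> //; lia.
Qed.

Lemma rootsP n (v : vec n) :
  reflect (v \in posroots n \/ (- v)%R \in posroots n) (v \in roots n).
Proof.
rewrite [v \in roots n]mem_cat; apply: (iffP orP) => -[Hv|Hv]; [by left | | by left | ].
  by right; case/mapP: Hv => w Hw ->; rewrite opprK.
by right; apply/mapP; exists (- v)%R; rewrite ?opprK.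
Qed.

Lemma alpha_pos n i j : 0 < i <= j -> j <= n -> alpha n i j \in posroots n.
Proof. by move=> Hij Hjn; apply/posrootsP; left; exists i, j; split=> //; lia. Qed.

Lemma beta_pos n i j : 0 < i < j -> j <= n -> beta n i j \in posroots n.
Proof. by move=> Hij Hjn; apply/posrootsP; right; exists i, j; split=> //; lia. Qed.

Lemma pos_root n (v : vec n) : v \in posroots n -> v \in roots n.
Proof. by move=> Hv; apply/rootsP; left. Qed.

Lemma root_shapes n (v : vec n) : v \in roots n ->
  (exists i j, [/\ 0 < i, i <= j <= n & v = alpha n i j \/ v = (- alpha n i j)%R]) \/
  (exists i j, [/\ 0 < i, i < j <= n & v = beta n i j \/ v = (- beta n i j)%R]).
Proof.
case/rootsP=> /posrootsP [[i [j [Hi Hj Ev]]]|[i [j [Hi Hj Ev]]]];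
  [left|right|left|right]; exists i, j; split=> //;
  by [left | right; rewrite -Ev opprK].
Qed.

Ltac root_cases H := case/root_shapes: H => -[? [? [? ? [->| ->]]]].

Lemma root_coord_bound n (v : vec n) k : v \in roots n -> (v k <= coord_bound k)%R.
Proof. by move=> Hv; root_cases Hv; coord. Qed.

Lemma root_sign n (v : vec n) x y : v \in roots n -> (0 < v x)%R -> (v y < 0)%R -> False.
Proof. by move=> Hv; root_cases Hv; coord. Qed.

Lemma root_gap n (v : vec n) (x y z : 'I_n) : v \in roots n -> x < y < z ->
  (0 < v x)%R -> v y = 0%R -> (0 < v z)%R -> False.
Proof. by move=> Hv; root_cases Hv; coord. Qed.

Lemma root_two_one n (v : vec n) (x y : 'I_n) : v \in roots n -> x < y ->
  v x = 2%R -> v y = 1%R -> False.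
Proof. by move=> Hv; root_cases Hv; coord. Qed.

Lemma root_zero_two n (v : vec n) (x y : 'I_n) : v \in roots n -> y = x.+1 :> nat ->
  v x = 0%R -> v y = 2%R -> False.
Proof. by move=> Hv; root_cases Hv; coord. Qed.

Lemma alpha_add_beta n i j : 1 < i < j -> (alpha n 1 j.-1 + beta n i j)%R = beta n 1 i.
Proof. by move=> Hij; apply/ffunP => k; coord. Qed.

Lemma inJ_ord n (J : {set 'I_n}) (k : 'I_n) : inJ J k.+1 = (k \in J).
Proof.
apply/existsP/idP => [[k' /andP [Hk' /eqP /succn_inj Ek]]|Hk].
  by rewrite -(val_inj Ek).
by exists k; rewrite Hk eqxx.
Qed.

(* Index pairs.  A pair p = (i, j) stands for beta_{i,j}; a sequence of pairs is
   nested when each pair strictly encloses all later ones. *)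

Definition proper_pair (p : nat * nat) : bool := p.1 < p.2.

Definition encloses (p q : nat * nat) : bool := (p.1 < q.1) && (q.2 < p.2).

Definition nested (ps : seq (nat * nat)) : bool :=
  all proper_pair ps && pairwise encloses ps.

(* beta_{i,j} is a positive root. *)
Definition valid_pair (n : nat) (p : nat * nat) : bool := (0 < p.1 < p.2) && (p.2 <= n).

Definition admissible n (J : {set 'I_n}) (p : nat * nat) : bool :=
  ~~ inJ J p.2 && (inJ J p.1 ==> (p.2 == p.1.+1)).

Lemma sorted_nested (ps : seq (nat * nat)) :
  sorted ltn (unzip1 ps ++ rev (unzip2 ps)) = nested ps.
Proof.
rewrite sorted_pairwise; last exact: ltn_trans.
elim: ps => [//|[x y] ps IH].
rewrite /= rev_cons -rcons_cat pairwise_rcons all_rcons IH /nested /= -!andbA.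
congr andb; rewrite !all_cat !all_rev !all_map -!andbA.
have [Hlt|_] := boolP (all proper_pair ps); last by rewrite !andbF.
rewrite /= !andbA -!all_predI; congr andb.
by apply: eq_in_all => -[a b] /(allP Hlt); rewrite /proper_pair /encloses /=; lia.
Qed.

Lemma chain1_zip n s (ii jj : seq nat) : size ii = s -> size jj = s ->
  chain1 n s ii jj = nested (zip ii jj) && all (valid_pair n) (zip ii jj).
Proof.
move=> Hi Hj; rewrite /chain1 Hi Hj eqxx /=.
have Hsz : size ii = size jj by rewrite Hi Hj.
set Z := zip ii jj.
have E1 : unzip1 Z = ii by rewrite unzip1_zip // Hsz.
have E2 : unzip2 Z = jj by rewrite unzip2_zip // Hsz.
rewrite -{1}E1 -{1}E2 sorted_nested -E1 -E2 all_cat !all_map /nested -andbA.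
have [Hlt|] := boolP (all proper_pair Z); last by [].
rewrite /= -all_predI; congr andb.
by apply: eq_in_all => -[a b] /(allP Hlt); rewrite /proper_pair /valid_pair /=; lia.
Qed.

(* Pairs that are pairwise comparable for [encloses] can be listed as a nested
   sequence: sort them by their first index. *)
Lemma nested_sort (ps : seq (nat * nat)) : uniq ps -> all proper_pair ps ->
  {in ps &, forall p q, p != q -> encloses p q || encloses q p} ->
  exists2 qs, perm_eq ps qs & nested qs.
Proof.
move=> Ups Pps Cps; pose le1 (p q : nat * nat) := p.1 <= q.1.
have Eqs : perm_eq (sort le1 ps) ps by rewrite perm_sort.
exists (sort le1 ps); first by rewrite perm_sym.
rewrite /nested (perm_all _ Eqs) Pps /=.
have Sq : pairwise le1 (sort le1 ps).
  rewrite -sorted_pairwise; first by apply: sort_sorted => p q; apply: leq_total.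
  by move=> q p r; apply: leq_trans.
have Uq : pairwise [rel p q | p != q] (sort le1 ps).
  by rewrite -uniq_pairwise (perm_uniq Eqs).
move: (conj Sq Uq) => /andP; rewrite -pairwise_relI.
apply: (sub_in_pairwise (P := mem (sort le1 ps))); last exact/allP.
move=> p q; rewrite !(perm_mem Eqs) => Hp Hq /andP [Hle Hne].
by move: (Cps p q Hp Hq Hne); rewrite /le1 /encloses in Hle *; lia.
Qed.

Lemma nested_cases ps p q : nested ps -> p \in ps -> q \in ps -> p != q ->
  encloses p q || encloses q p.
Proof.
case/andP=> _; elim: ps => [//|r ps IH] /andP [Hr Hps].
rewrite !in_cons => /orP [/eqP ->|Hp] /orP [/eqP ->|Hq] Hpq.
- by rewrite eqxx in Hpq.
- by rewrite (allP Hr).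
- by rewrite (allP Hr) ?orbT.
- exact: IH.
Qed.

Lemma nested_head ps p : nested ps -> p \in ps ->
  head 0 (unzip1 ps) <= p.1 /\ p.2 <= head 0 (unzip2 ps).
Proof.
case: ps => [//|h ps] /andP [_ /andP [Hh _]]; rewrite in_cons => /orP [/eqP -> //|Hp].
by move: (allP Hh p Hp); rewrite /encloses /=; lia.
Qed.

Lemma cond11_cons n (J : {set 'I_n}) x y ii jj :
  cond11 J (x :: ii) (y :: jj) = [&& ~~ inJ J x, ~~ inJ J y & cond11 J ii jj].
Proof. by rewrite /cond11 /= !all_cat /=; congr andb; apply: andbCA. Qed.

Lemma cond12_cons n (J : {set 'I_n}) x y ii jj : size ii = size jj -> 0 < size ii ->
  cond12 J (size ii).+1 (x :: ii) (y :: jj) =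
  [&& ~~ inJ J x, ~~ inJ J y & cond12 J (size ii) ii jj].
Proof.
case: ii jj => [|x' ii] [|y' jj] //= _ _.
by rewrite /cond12 /= cond11_cons; case: (inJ J x); case: (inJ J y).
Qed.

(* In a nested chain only the innermost pair can have its first index in J, so
   admissibility of all pairs is the condition of A^{1,1} or of A^{1,2}. *)
Lemma cond_admissible n (J : {set 'I_n}) ii jj : size ii = size jj -> nested (zip ii jj) ->
  cond11 J ii jj || cond12 J (size ii) ii jj = all (admissible J) (zip ii jj).
Proof.
elim: ii jj => [|x ii IH] [|y jj] //= [Hsz].
case: ii jj Hsz IH => [|x' ii] [|y' jj] //= Hsz IH.
  rewrite /cond12 /cond11 /admissible /= !andbT.
  by case: (inJ J x); case: (inJ J y); rewrite //= andbC.
rewrite /nested /= => /and3P [/and3P [_ Hx'y' Hprop] /andP [/andP [Hxx' Hy'y] _] Hrest].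
have Hyx : (y == x.+1) = false.
  by apply/eqP; move: Hx'y'; rewrite /proper_pair /= in Hxx' Hy'y *; lia.
have Hnest : nested (zip (x' :: ii) (y' :: jj)) by rewrite /nested /= Hx'y' Hprop.
rewrite cond11_cons (@cond12_cons _ J x y (x' :: ii) (y' :: jj)) //.
have /= <- := IH (y' :: jj) Hsz Hnest.
by rewrite /admissible /= Hyx; case: (inJ J x); case: (inJ J y).
Qed.

Lemma cond12_inJ n (J : {set 'I_n}) s ii jj : size ii = s -> size jj = s ->
  cond12 J s ii jj -> exists2 p, p \in zip ii jj & inJ J p.1.
Proof.
move=> Hi Hj /and5P [Hs _ HiJ _ _]; exists (last 0 ii, last 0 jj) => //.
case/lastP: ii Hi HiJ => [|ii x] Hi; first by rewrite -Hi in Hs.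
case/lastP: jj Hj => [|jj y] Hj _; first by rewrite -Hj in Hs.
rewrite !last_rcons zip_rcons ?mem_rcons ?mem_head //.
by apply: succn_inj; rewrite -(size_rcons ii x) -(size_rcons jj y) Hi Hj.
Qed.

Lemma nrle_at n (a b : vec n) (k : 'I_n) : (b k < a k)%R -> ~~ rle a b.
Proof. by move=> Hk; apply/forallP => /(_ k); rewrite leNgt Hk. Qed.

Lemma rle_alpha n l l' : l <= l' -> rle (alpha n 1 l) (alpha n 1 l').
Proof. by move=> Hl; apply/forallP => k; coord. Qed.

Lemma rle_beta n i j i' j' : i' <= i -> j' <= j -> rle (beta n i j) (beta n i' j').
Proof. by move=> Hi Hj; apply/forallP => k; coord. Qed.

Lemma beta_inj n p q : valid_pair n p -> valid_pair n q ->
  beta n p.1 p.2 = beta n q.1 q.2 -> p = q.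
Proof.
case: p q => [i j] [i' j']; rewrite /valid_pair /= => Hp Hq E.
have coordE x : 0 < x <= n -> exists2 k : 'I_n, k.+1 = x & beta n i j k = beta n i' j' k.
  by case/ord_of => k Hk; exists k => //; rewrite E.
have Ei : i = i'.
  by case: (ltngtP i i') => // H; [case: (coordE i) | case: (coordE i')];
    [lia | move=> k Hk; coord | lia | move=> k Hk; coord].
have Ej : j = j'.
  by case: (ltngtP j j') => // H; [case: (coordE j) | case: (coordE j')];
    [lia | move=> k Hk; coord | lia | move=> k Hk; coord].
by rewrite Ei Ej.
Qed.

Lemma alpha1_inj n l l' : 0 < l <= n -> 0 < l' <= n -> alpha n 1 l = alpha n 1 l' -> l = l'.
Proof.
move=> Hl Hl' E; have coordE (k : 'I_n) := congr1 (fun v : vec n => v k) E.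
case: (ltngtP l l') => // H; [case: (@ord_of n l') | case: (@ord_of n l)];
  by [lia | move=> k Hk; move: (coordE k); coord].
Qed.

Lemma alpha_ne_beta n l p : valid_pair n p -> alpha n 1 l != beta n p.1 p.2.
Proof.
rewrite /valid_pair => Hp; apply/eqP => E.
have [k Hk] : exists k : 'I_n, k.+1 = n by apply: ord_of; lia.
by move: (congr1 (fun v : vec n => v k) E); coord.
Qed.

Lemma incomparable_betas n p q : ~~ rle (beta n p.1 p.2) (beta n q.1 q.2) ->
  ~~ rle (beta n q.1 q.2) (beta n p.1 p.2) -> encloses p q || encloses q p.
Proof.
case: p q => [i j] [i' j'] /= H1 H2; apply/contraT; rewrite /encloses /= => Hno.
have [[Hi Hj]|[Hi Hj]] : (i' <= i /\ j' <= j) \/ (i <= i' /\ j <= j') by lia.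
  by rewrite rle_beta in H1.
by rewrite rle_beta in H2.
Qed.

Lemma encloses_incomparable n p q : valid_pair n p -> valid_pair n q -> encloses p q ->
  ~~ rle (beta n p.1 p.2) (beta n q.1 q.2) && ~~ rle (beta n q.1 q.2) (beta n p.1 p.2).
Proof.
case: p q => [i j] [i' j']; rewrite /valid_pair /encloses /= => Hp Hq Hpq.
have [ki Hki] : exists k : 'I_n, k.+1 = i by apply: ord_of; lia.
have [kj Hkj] : exists k : 'I_n, k.+1 = j' by apply: ord_of; lia.
by apply/andP; split; [apply: (nrle_at (k := ki)) | apply: (nrle_at (k := kj))]; coord.
Qed.

Lemma alpha_beta_incomparable n l p : valid_pair n p -> 1 < p.1 -> p.2 <= l ->
  ~~ rle (alpha n 1 l) (beta n p.1 p.2) && ~~ rle (beta n p.1 p.2) (alpha n 1 l).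
Proof.
case: p => i j; rewrite /valid_pair /= => Hp Hi Hjl.
have [k1 Hk1] : exists k : 'I_n, k.+1 = 1 by apply: ord_of; lia.
have [kj Hkj] : exists k : 'I_n, k.+1 = j by apply: ord_of; lia.
by apply/andP; split; [apply: (nrle_at (k := k1)) | apply: (nrle_at (k := kj))]; coord.
Qed.

Lemma Phi_above n (A : seq (vec n)) a x :
  a \in A -> x \in posroots n -> rle a x -> x \in Phi A.
Proof. by move=> Ha Hx Hax; rewrite mem_filter Hx andbT; apply/hasP; exists a. Qed.

Lemma abelian_of_excess n (A : seq (vec n)) :
  (forall a b, a \in A -> b \in A -> exists k : 'I_n, (coord_bound k < a k + b k)%R) ->
  abelian_set A.
Proof.
move=> Hexc b1 b2; rewrite !mem_filter => /andP [/hasP [a1 Ha1 /forallP H1] _].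
move=> /andP [/hasP [a2 Ha2 /forallP H2] _]; apply/negP => /root_coord_bound Hb.
have [k Hk] := Hexc a1 a2 Ha1 Ha2.
have := le_lt_trans (Hb k) (lt_le_trans Hk (lerD (H1 k) (H2 k))).
by rewrite ffunE ltxx.
Qed.

Section AdmissibleRoots.
Variables (n : nat) (J : {set 'I_n}).

(* The elements an abelian J-antichain can contain: alpha_{1,l} with 1, l outside J,
   and beta_{i,j} with an admissible index pair. *)
Definition adm_alpha (l : nat) : bool := [&& 0 < l <= n, ~~ inJ J 1 & ~~ inJ J l].

Definition adm_root (a : vec n) : Prop :=
  (exists2 l, adm_alpha l & a = alpha n 1 l) \/
  (exists2 p, valid_pair n p && admissible J p & a = beta n p.1 p.2).

Lemma adm_root_pos a : adm_root a -> a \in posroots n.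
Proof.
case=> [[l /and3P [Hl _ _] ->]|[[i j] /andP [/andP [Hij Hj] _] ->]];
  by [apply: alpha_pos; lia | apply: beta_pos].
Qed.

Lemma adm_root_notRJ a : adm_root a -> ~~ inRJ J a.
Proof.
have witness (k : 'I_n) : k \notin J -> (a k != 0)%R -> ~~ inRJ J a.
  by move=> Hk Hak; apply/negP => /andP [_ /forallP /(_ k)]; rewrite Hk (negbTE Hak).
case=> [[l /and3P [Hl H1 _] Ea]|[[i j] + Ea]].
  have [k Hk] : exists k : 'I_n, k.+1 = 1 by apply: ord_of; lia.
  by apply: (witness k); [rewrite -inJ_ord Hk | rewrite Ea; coord].
rewrite /valid_pair /admissible /= => /andP [/andP [Hij Hj] /andP [HjJ _]].
have [k Hk] : exists k : 'I_n, k.+1 = j by apply: ord_of; lia.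
by apply: (witness k); [rewrite -inJ_ord Hk | rewrite Ea; coord].
Qed.

(* Subtracting alpha_{m+1}, m in J, from an admissible root never gives a root:
   the result would violate one of the coordinate patterns of roots. *)
Lemma adm_root_minimal a (m : 'I_n) : adm_root a -> m \in J -> (a - simple m)%R \notin roots n.
Proof.
move=> + Hm; have HmJ x : ~~ inJ J x -> m.+1 != x by apply: contraNneq => <-; rewrite inJ_ord.
case=> [[l /and3P [Hl H1 Hl1] ->]|[[i j] + ->]].
  have [k1 Hk1] : exists k : 'I_n, k.+1 = 1 by apply: ord_of; lia.
  have [kl Hkl] : exists k : 'I_n, k.+1 = l by apply: ord_of; lia.
  move: (HmJ _ H1) (HmJ _ Hl1) => Hm1 Hml; apply/negP => Hr.
  case: (ltnP m.+1 l) => Hlm.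
    by apply: (root_gap (x := k1) (y := m) (z := kl) Hr); coord.
  by apply: (root_sign (x := k1) (y := m) Hr); coord.
rewrite /valid_pair /admissible /= => /andP [/andP [Hij Hj] /andP [HjJ HiJ]].
have [ki Hki] : exists k : 'I_n, k.+1 = i by apply: ord_of; lia.
have [kj Hkj] : exists k : 'I_n, k.+1 = j by apply: ord_of; lia.
have [kn Hkn] : exists k : 'I_n, k.+1 = n by apply: ord_of; lia.
move: (HmJ _ HjJ) => Hmj; apply/negP => Hr.
case: (ltngtP m.+1 i) => Hmi.
- by apply: (root_sign (x := kn) (y := m) Hr); coord.
- case: (ltngtP m.+1 j) => Hmj'; last by rewrite Hmj' eqxx in Hmj.
    by apply: (root_gap (x := ki) (y := m) (z := kn) Hr); coord.
  by apply: (root_two_one (x := kj) (y := m) Hr); coord.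
- have /eqP Hji : j == i.+1 by move: HiJ; rewrite -Hmi inJ_ord Hm.
  by apply: (root_zero_two (x := m) (y := kj) Hr); coord.
Qed.
End AdmissibleRoots.

Section AbelianAntichainElements.
Variables (n : nat) (J : {set 'I_n}) (A : seq (vec n)).
Hypotheses (HA : J_antichain J A) (Hab : abelian_set A).

Lemma not_minimal a (m : 'I_n) : a \in A -> m \in J -> (a - simple m)%R \in posroots n -> False.
Proof. by case: HA => _ _ _ Hmin Ha Hm /pos_root; apply/negP/Hmin. Qed.

Lemma not_abelian_above a1 a2 x1 x2 : a1 \in A -> a2 \in A ->
  x1 \in posroots n -> x2 \in posroots n -> rle a1 x1 -> rle a2 x2 ->
  (x1 + x2)%R \in posroots n -> False.
Proof.
move=> Ha1 Ha2 Hx1 Hx2 H1 H2 /pos_root.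
by apply/negP; apply: Hab; [exact: Phi_above Ha1 Hx1 H1 | exact: Phi_above Ha2 Hx2 H2].
Qed.

(* An alpha_{i,j} in A starts at alpha_1: otherwise alpha_{1,j} and beta_{i,j+1}
   (or alpha_{1,n} and alpha_{i,n} when j = n), both above alpha_{i,j}, add up to
   the root beta_{1,i}. *)
Lemma antichain_alpha_first i j : alpha n i j \in A -> 0 < i <= j -> j <= n -> i = 1.
Proof.
move=> Ha Hij Hjn; case: (ltnP 1 i) => Hi; last lia.
exfalso; case: (ltnP j n) => Hj.
  apply: (not_abelian_above Ha Ha (x1 := alpha n 1 j) (x2 := beta n i j.+1));
    rewrite ?(@alpha_add_beta n i j.+1) //; try (apply/forallP => k; coord).
  + by apply: alpha_pos; lia.
  + by apply: beta_pos; lia.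
  + by apply: beta_pos; lia.
  + lia.
have Ejn : j = n by lia.
apply: (not_abelian_above Ha Ha (x1 := alpha n 1 j) (x2 := alpha n i j));
  try (apply/forallP => k; coord).
+ by apply: alpha_pos; lia.
+ by apply: alpha_pos; lia.
+ by rewrite Ejn; apply: beta_pos; lia.
Qed.

(* An alpha_{1,l} in A has 1 and l outside J: otherwise removing alpha_1 or
   alpha_l leaves a positive root (or alpha_{1,1} lies in R^+(J)). *)
Lemma antichain_alpha_adm l : alpha n 1 l \in A -> 0 < l <= n -> adm_alpha J l.
Proof.
move=> Ha Hl.
have [k1 Hk1] : exists k : 'I_n, k.+1 = 1 by apply: ord_of; lia.
have H1 : ~~ inJ J 1.
  rewrite -Hk1 inJ_ord; apply/negP => Hk1J.
  case: (ltnP 1 l) => Hl1.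
    apply: (not_minimal Ha Hk1J).
    have -> : (alpha n 1 l - simple k1)%R = alpha n 2 l by apply/ffunP => k; coord.
    by apply: alpha_pos; lia.
  have [_ HRJ _ _] := HA; move: (HRJ _ Ha) => /negP; apply; rewrite /inRJ.
  apply/andP; split; first by apply: alpha_pos; lia.
  apply/forallP => k; apply/implyP => HkJ.
  have Hkk1 : (k : nat) != k1 by apply: contraNneq HkJ => /val_inj ->.
  by apply/eqP; coord.
have HlJ : ~~ inJ J l.
  case: (ltnP 1 l) => Hl1; last by have -> : l = 1 by lia.
  have [kl Hkl] : exists k : 'I_n, k.+1 = l by apply: ord_of; lia.
  rewrite -Hkl inJ_ord; apply/negP => HklJ.
  apply: (not_minimal Ha HklJ).
  have -> : (alpha n 1 l - simple kl)%R = alpha n 1 l.-1 by apply/ffunP => k; coord.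
  by apply: alpha_pos; lia.
by rewrite /adm_alpha Hl H1 HlJ.
Qed.

Lemma antichain_beta p : beta n p.1 p.2 \in A -> valid_pair n p -> admissible J p.
Proof.
case: p => i j Hb; rewrite /valid_pair /admissible /= => /andP [Hij Hjn].
apply/andP; split.
  have [kj Hkj] : exists k : 'I_n, k.+1 = j by apply: ord_of; lia.
  rewrite -Hkj inJ_ord; apply/negP => HkjJ; apply: (not_minimal Hb HkjJ).
  case: (ltnP j n) => Hj.
    have -> : (beta n i j - simple kj)%R = beta n i j.+1 by apply/ffunP => k; coord.
    by apply: beta_pos; lia.
  have -> : (beta n i j - simple kj)%R = alpha n i n by apply/ffunP => k; coord.
  by apply: alpha_pos; lia.
have [ki Hki] : exists k : 'I_n, k.+1 = i by apply: ord_of; lia.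
rewrite -Hki inJ_ord; apply/implyP => HkiJ; apply/eqP.
case: (ltnP i.+1 j) => Hj; last lia.
exfalso; apply: (not_minimal Hb HkiJ).
have -> : (beta n i j - simple ki)%R = beta n i.+1 j by apply/ffunP => k; coord.
by apply: beta_pos; lia.
Qed.

Lemma antichain_elements a : a \in A -> adm_root J a.
Proof.
move=> Ha; have [Hpos _ _ _] := HA.
case/posrootsP: (Hpos a Ha) => [[i [j [Hi Hij Ea]]]|[i [j [Hi Hij Ea]]]];
  rewrite Ea in Ha *.
  have Ei : i = 1 by apply: antichain_alpha_first Ha _ _; lia.
  subst i; left; exists j => //.
  by apply: antichain_alpha_adm Ha _; lia.
have Hv : valid_pair n (i, j) by rewrite /valid_pair /=; lia.
by right; exists (i, j); rewrite // Hv (antichain_beta (p := (i, j))).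
Qed.

Lemma antichain_alpha_beta l p : alpha n 1 l \in A -> beta n p.1 p.2 \in A ->
  valid_pair n p -> 1 < p.1 /\ p.2 <= l.
Proof.
case: p => i j Ha Hb; rewrite /valid_pair /= => /andP [Hij Hjn].
have Hi : 1 < i.
  case: (ltnP 1 i) => // Hi; have Ei : i = 1 by lia.
  have Hne : alpha n 1 l != beta n i j.
    by apply: (@alpha_ne_beta n l (i, j)); rewrite /valid_pair /=; lia.
  have [_ _ Hanti _] := HA; case/negP: (Hanti _ _ Ha Hb Hne).
  by apply/forallP => k; coord.
split=> //; case: (leqP j l) => // Hlj; exfalso.
apply: (not_abelian_above Ha Hb (x1 := alpha n 1 j.-1) (x2 := beta n i j)).
- by apply: alpha_pos; lia.
- by apply: beta_pos; lia.
- by apply: rle_alpha; lia.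
- by apply/forallP => k; coord.
- by rewrite alpha_add_beta; [apply: beta_pos | ]; lia.
Qed.
End AbelianAntichainElements.

Lemma abelian_antichainP n (J : {set 'I_n}) (A : seq (vec n)) :
  J_antichain J A /\ abelian_set A <->
  [/\ forall a, a \in A -> adm_root J a,
      forall a b, a \in A -> b \in A -> a != b -> ~~ rle a b &
      forall l p, 0 < l <= n -> alpha n 1 l \in A -> valid_pair n p ->
        beta n p.1 p.2 \in A -> p.2 <= l].
Proof.
split=> [[HA Hab]|[Hadm Hanti Hbound]].
  split; [exact: antichain_elements | by case: HA | ].
  by move=> l p _ Ha Hp Hb; case: (antichain_alpha_beta HA Hab Ha Hb Hp).
split; first split.
- by move=> a /Hadm /adm_root_pos.
- by move=> a /Hadm /adm_root_notRJ.
- exact: Hanti.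
- by move=> a m /Hadm Ha Hm; exact: adm_root_minimal Ha Hm.
apply: abelian_of_excess => a b Ha Hb.
have coord_of x : 0 < x <= n -> exists k : 'I_n, k.+1 = x by apply: ord_of.
case: (Hadm a Ha) => [[l /and3P [Hl _ _] Ea]|[[i j] /andP [Hp _] Ea]];
  case: (Hadm b Hb) => [[l' /and3P [Hl' _ _] Eb]|[[i' j'] /andP [Hq _] Eb]]; subst a b.
- by have [k Hk] := coord_of 1 ltac:(lia); exists k; coord.
- have := Hbound l _ Hl Ha Hq Hb; move: Hq; rewrite /valid_pair /= => Hq Hjl.
  by have [k Hk] := coord_of j' ltac:(lia); exists k; coord.
- have := Hbound l' _ Hl' Hb Hp Ha; move: Hp; rewrite /valid_pair /= => Hp Hjl.
  by have [k Hk] := coord_of j ltac:(lia); exists k; coord.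
- move: Hp Hq; rewrite /valid_pair /= => Hp Hq.
  by have [k Hk] := coord_of n ltac:(lia); exists k; coord.
Qed.


Lemma preimage_seq (T : Type) (U : eqType) (f : T -> U) (P : pred T) (s : seq U) :
  (forall u, u \in s -> exists2 x, P x & u = f x) -> exists2 xs, s = map f xs & all P xs.
Proof.
elim: s => [|u s IH] Hs; first by exists [::].
have [x Px ->] := Hs u (mem_head u s).
have [|xs -> Pxs] := IH; first by move=> v Hv; apply: Hs; rewrite in_cons Hv orbT.
by exists (x :: xs); rewrite //= Px.
Qed.

Lemma beta_chain n (J : {set 'I_n}) (Q : pred (nat * nat)) (B : seq (vec n)) : uniq B ->
  (forall b, b \in B ->
     exists2 p, [&& valid_pair n p, admissible J p & Q p] & b = beta n p.1 p.2) ->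
  (forall a b, a \in B -> b \in B -> a != b -> ~~ rle a b) ->
  exists ii jj, [/\ chain1 n (size B) ii jj, B =i betas n ii jj,
    cond11 J ii jj || cond12 J (size B) ii jj & all Q (zip ii jj)].
Proof.
move=> UB /preimage_seq [ps EB Hps] Hanti.
have Ups : uniq ps by move: UB; rewrite EB => /map_uniq.
have Hvalid p : p \in ps -> valid_pair n p by move/(allP Hps) => /and3P [].
have [qs Eqs Nqs] : exists2 qs, perm_eq ps qs & nested qs.
  apply: nested_sort => //.
    by apply/allP => p /Hvalid; rewrite /valid_pair /proper_pair; lia.
  move=> p q Hp Hq Hpq; have Hne : beta n p.1 p.2 != beta n q.1 q.2.
    by apply: contra_neq Hpq => /beta_inj; apply; apply: Hvalid.
  apply: incomparable_betas; apply: Hanti;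
    by rewrite ?EB ?(map_f _ Hp) ?(map_f _ Hq) // eq_sym.
have Hqs : all [pred p | [&& valid_pair n p, admissible J p & Q p]] qs.
  by rewrite -(perm_all _ Eqs).
have Sqs : size qs = size B by rewrite EB size_map (perm_size Eqs).
exists (unzip1 qs), (unzip2 qs); split.
- rewrite chain1_zip ?size_map // zip_unzip Nqs /=.
  by apply/allP => p /(allP Hqs) /and3P [].
- by move=> b; rewrite EB /betas zip_unzip; apply/perm_mem/perm_map.
- rewrite -Sqs -(size_map fst) cond_admissible ?size_map ?zip_unzip //.
  by apply/allP => p /(allP Hqs) /and3P [].
- by rewrite zip_unzip; apply/allP => p /(allP Hqs) /and3P [].
Qed.

Section Classification.
Variables (n : nat) (J : {set 'I_n}) (s : nat) (A : seq (vec n)).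
Hypotheses (UA : uniq A) (SA : size A = s).
Hypothesis Hanti : forall a b, a \in A -> b \in A -> a != b -> ~~ rle a b.

Lemma class_without_alpha :
  (forall a, a \in A -> exists2 p, valid_pair n p && admissible J p & a = beta n p.1 p.2) ->
  inA11 J s A \/ inA12 J s A.
Proof.
move=> Hbeta; have HB b : b \in A ->
    exists2 p, [&& valid_pair n p, admissible J p & predT p] & b = beta n p.1 p.2.
  by case/Hbeta => p Hp ->; exists p; rewrite // andbT.
have [ii [jj [C EA Hc _]]] := beta_chain UA HB Hanti.
by rewrite SA in C Hc; case/orP: Hc => Hc; [left | right]; exists ii, jj.
Qed.

Hypothesis Hadm : forall a, a \in A -> adm_root J a.
Hypothesis Hbound : forall l p, 0 < l <= n -> alpha n 1 l \in A -> valid_pair n p ->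
  beta n p.1 p.2 \in A -> p.2 <= l.

Lemma betas_below_alpha l : adm_alpha J l -> alpha n 1 l \in A ->
  forall b, b \in rem (alpha n 1 l) A ->
  exists2 p, [&& valid_pair n p, admissible J p & (1 < p.1) && (p.2 <= l)] &
    b = beta n p.1 p.2.
Proof.
move=> /and3P [Hl _ _] Ha b; rewrite mem_rem_uniq // => /andP [Hne Hb].
case: (Hadm Hb) => [[l' /and3P [Hl' _ _] Eb]|[p /andP [Vp Ap] Eb]]; subst b.
  exfalso; case: (leqP l l') => Hll'.
    have Hne' : alpha n 1 l != alpha n 1 l' by rewrite eq_sym.
    by case/negP: (Hanti Ha Hb Hne'); apply: rle_alpha.
  by case/negP: (Hanti Hb Ha Hne); apply: rle_alpha; lia.
exists p => //; rewrite Vp Ap (Hbound Hl Ha Vp Hb) andbT /=.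
case: (ltnP 1 p.1) => // Hp1; exfalso.
case/negP: (Hanti Ha Hb (@alpha_ne_beta n l p Vp)).
by apply/forallP => k; move: Vp; rewrite /valid_pair; coord.
Qed.

Lemma class_with_alpha l : 0 < s -> adm_alpha J l -> alpha n 1 l \in A -> inA2J J s A.
Proof.
move=> Hs Hl Ha; have /and3P [Hl1 H1 HlJ] := Hl.
pose B := rem (alpha n 1 l) A.
have SB : size B = s.-1 by rewrite size_rem // SA.
have HantiB a b : a \in B -> b \in B -> a != b -> ~~ rle a b.
  by move=> /mem_rem Ha' /mem_rem Hb'; apply: Hanti.
have [ii [jj [C EB Hc HQ]]] := beta_chain (rem_uniq _ UA) (betas_below_alpha Hl Ha) HantiB.
rewrite SB in C Hc; split=> //; exists l, ii, jj; split; last by split.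
split=> //.
  apply/implyP => Hpos; have /and4P [/eqP Hi /eqP Hj _ _] := C.
  case: ii jj Hi Hj HQ {C EB Hc} => [|i ii] [|j jj] /= Hi Hj;
    [lia | lia | lia | by case/andP => /andP [-> ->]].
by move=> a; rewrite in_cons -EB mem_rem_uniq // inE; case: eqVneq => [->|].
Qed.
End Classification.

(* Every abelian J-antichain with s >= 1 elements lies in one of the three
   families, according to whether it contains some alpha_{1,l}. *)
Lemma abelian_antichain_classes n (J : {set 'I_n}) s (A : seq (vec n)) :
  0 < s -> uniq A -> size A = s -> J_antichain J A -> abelian_set A ->
  [\/ inA11 J s A, inA12 J s A | inA2J J s A].
Proof.
move=> Hs UA SA HA Hab.
have [Hadm Hanti Hbound] := proj1 (abelian_antichainP J A) (conj HA Hab).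
pose is_alpha (a : vec n) := has (fun l => a == alpha n 1 l) (iota 1 n).
case: (boolP (has is_alpha A)) => [/hasP [a Ha /hasP [l0 _ /eqP Ea0]] | /hasPn Hno].
  case: (Hadm a Ha) => [[l Hl Ea]|[p /andP [Vp _] Ea]].
    by apply: Or33; apply: (class_with_alpha UA SA Hanti Hadm Hbound Hs Hl); rewrite -Ea.
  by move: (@alpha_ne_beta n l0 p Vp); rewrite -Ea0 -Ea eqxx.
have Hbeta b : b \in A ->
    exists2 p, valid_pair n p && admissible J p & b = beta n p.1 p.2.
  move=> Hb; case: (Hadm b Hb) => [[l /and3P [Hl _ _] Eb]|//].
  by case/negP: (Hno b Hb); apply/hasP; exists l; [rewrite mem_iota; lia | rewrite Eb].
by case: (class_without_alpha UA SA Hanti Hbeta) => H; [apply: Or31 | apply: Or32].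
Qed.

Section IndexData.
Variables (n : nat) (J : {set 'I_n}).

Lemma chain_pairs s ii jj : chain1 n s ii jj -> cond11 J ii jj || cond12 J s ii jj ->
  [/\ nested (zip ii jj), size ii = s, size jj = s &
      all (fun p => valid_pair n p && admissible J p) (zip ii jj)].
Proof.
move=> C Hc; have /and4P [/eqP Hi /eqP Hj _ _] := C.
move: C; rewrite chain1_zip // => /andP [N V].
move: Hc; rewrite -{1}Hi cond_admissible ?Hi ?Hj // => Hc.
by split=> //; apply/allP => p Hp; rewrite (allP V) ?(allP Hc).
Qed.

Lemma betas_uniq ps : nested ps -> all (valid_pair n) ps -> uniq [seq beta n p.1 p.2 | p <- ps].
Proof.
case/andP=> _ N V; rewrite map_inj_in_uniq.
  by apply: (pairwise_uniq _ N) => p; rewrite /encloses ltnn.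
by move=> p q Hp Hq; apply: beta_inj; apply: (allP V).
Qed.

Lemma nested_betas_incomparable ps : nested ps -> all (valid_pair n) ps ->
  forall a b, a \in [seq beta n p.1 p.2 | p <- ps] -> b \in [seq beta n p.1 p.2 | p <- ps] ->
  a != b -> ~~ rle a b.
Proof.
move=> N V a b /mapP [p Hp ->] /mapP [q Hq ->] Hne.
have Hpq : p != q by apply: contra_neq Hne => ->.
have [Vp Vq] := (allP V p Hp, allP V q Hq).
by case/orP: (nested_cases N Hp Hq Hpq) => /encloses_incomparable;
  [move=> /(_ n Vp Vq) /andP [] | move=> /(_ n Vq Vp) /andP []].
Qed.

Lemma betas_abelian_antichain s ii jj (A : seq (vec n)) : uniq A -> chain1 n s ii jj ->
  A =i betas n ii jj -> cond11 J ii jj || cond12 J s ii jj -> inAsJ J s A.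
Proof.
move=> UA C EA Hc; have [N Hi Hj Hadm] := chain_pairs C Hc.
have V : all (valid_pair n) (zip ii jj) by apply/allP => p /(allP Hadm) /andP [].
suff [HA Hab] : J_antichain J A /\ abelian_set A.
  split=> //; rewrite (perm_size (uniq_perm UA (betas_uniq N V) EA)).
  by rewrite size_map size_zip Hi Hj minnn.
apply/abelian_antichainP; split.
- move=> a; rewrite EA => /mapP [p Hp ->]; right; exists p => //; exact: (allP Hadm).
- by move=> a b; rewrite !EA; apply: nested_betas_incomparable.
- move=> l p _; rewrite EA => /mapP [q Hq E].
  by move: (@alpha_ne_beta n l q (allP V q Hq)); rewrite E eqxx.
Qed.

(* In A^2 data, the condition on the outermost pair propagates to all pairs. *)
Lemma pairs_below_alpha s ii jj l : nested (zip ii jj) -> size ii = s -> size jj = s ->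
  (0 < s) ==> ((1 < head 0 ii) && (head 0 jj <= l)) ->
  forall p, p \in zip ii jj -> 1 < p.1 /\ p.2 <= l.
Proof.
move=> N Hi Hj Hhead p Hp; have Hpos : 0 < size (zip ii jj) by case: (zip ii jj) Hp.
move: (nested_head N Hp) Hhead; rewrite unzip1_zip ?unzip2_zip ?Hi ?Hj //.
by rewrite size_zip Hi Hj minnn in Hpos; rewrite Hpos /=; lia.
Qed.

Lemma alpha_betas_abelian_antichain s (A : seq (vec n)) : uniq A -> inA2J J s A -> inAsJ J s A.
Proof.
move=> UA [H1 [l [ii [jj [[Hs Hl C Hhead EA] [HlJ Hc]]]]]].
have [N Hi Hj Hadm] := chain_pairs C Hc.
have V : all (valid_pair n) (zip ii jj) by apply/allP => p /(allP Hadm) /andP [].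
have Hsz : size (zip ii jj) = s.-1 by rewrite size_zip Hi Hj minnn.
have Hinner := pairs_below_alpha N Hi Hj Hhead.
have Hnot : alpha n 1 l \notin betas n ii jj.
  by apply/mapP => -[q Hq E]; move: (@alpha_ne_beta n l q (allP V q Hq)); rewrite E eqxx.
have UL : uniq (alpha n 1 l :: betas n ii jj) by rewrite /= Hnot betas_uniq.
suff [HA Hab] : J_antichain J A /\ abelian_set A.
  split=> //; rewrite (perm_size (uniq_perm UA UL EA)) /= size_map Hsz; lia.
apply/abelian_antichainP; split.
- move=> a; rewrite EA in_cons => /orP [/eqP -> | /mapP [p Hp ->]].
    by left; exists l; rewrite // /adm_alpha Hl H1 HlJ.
  by right; exists p; rewrite // (allP Hadm).
- move=> a b; rewrite !EA !in_cons.
  case/orP => [/eqP -> | Ha]; case/orP => [/eqP -> | Hb]; first by rewrite eqxx.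
  + move=> _; case/mapP: Hb => q Hq ->; have [Hq1 Hql] := Hinner q Hq.
    by case/andP: (alpha_beta_incomparable (allP V q Hq) Hq1 Hql).
  + move=> _; case/mapP: Ha => p Hp ->; have [Hp1 Hpl] := Hinner p Hp.
    by case/andP: (alpha_beta_incomparable (allP V p Hp) Hp1 Hpl).
  + exact: (nested_betas_incomparable N V Ha Hb).
- move=> l' p Hl'; rewrite !EA !in_cons => Ha' Vp Hb.
  have -> : l' = l.
    case/orP: Ha' => [/eqP E | /mapP [q Hq E]]; first exact: alpha1_inj Hl' Hl E.
    by move: (@alpha_ne_beta n l' q (allP V q Hq)); rewrite E eqxx.
  case/orP: Hb => [/eqP E | /mapP [q Hq E]].
    by move: (@alpha_ne_beta n l p Vp); rewrite E eqxx.
  by rewrite (beta_inj Vp (allP V q Hq) E); case: (Hinner q Hq).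
Qed.
End IndexData.

(* Disjointness: A^{1,2} data contain a first index in J, while the beta's of
   A^1 data are never alpha_{1,l}. *)
Lemma A11_A12_disjoint n (J : {set 'I_n}) s (A : seq (vec n)) :
  inA11 J s A -> inA12 J s A -> False.
Proof.
move=> [ii [jj [C E H11]]] [ii' [jj' [C' E' H12]]].
have := @chain_pairs n J s ii jj C; rewrite H11 => /(_ isT) [_ Hi Hj Hadm].
have := @chain_pairs n J s ii' jj' C'; rewrite H12 orbT => /(_ isT) [_ Hi' Hj' Hadm'].
have [p Hp HpJ] := cond12_inJ Hi' Hj' H12.
have : beta n p.1 p.2 \in A by rewrite E' (map_f _ Hp).
rewrite E => /mapP [q Hq Epq].
have Vp : valid_pair n p by case/andP: (allP Hadm' p Hp).
have Vq : valid_pair n q by case/andP: (allP Hadm q Hq).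
have Hq1 : q.1 \in ii ++ jj.
  by rewrite mem_cat -{1}(unzip1_zip (s := ii) (t := jj)) ?Hi ?Hj // (map_f _ Hq).
by move: (allP H11 _ Hq1); rewrite -(beta_inj Vp Vq Epq) HpJ.
Qed.

Lemma A1_A2_disjoint n (J : {set 'I_n}) s (A : seq (vec n)) ii jj :
  chain1 n s ii jj -> A =i betas n ii jj -> inA2J J s A -> False.
Proof.
move=> C E [_ [l [ii' [jj' [[_ _ _ _ E'] _]]]]].
have : alpha n 1 l \in A by rewrite E' mem_head.
rewrite E => /mapP [q Hq Eq].
have /and4P [/eqP Hi /eqP Hj _ _] := C; move: C; rewrite chain1_zip // => /andP [_ V].
by move: (@alpha_ne_beta n l q (allP V q Hq)); rewrite Eq eqxx.
Qed.

Theorem mainTheorem9 (n : nat) (J : {set 'I_n}) (s : nat) :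
  (2 <= n)%N -> (1 <= s)%N ->
  (forall A : seq (vec n), uniq A ->
     inAsJ J s A <-> [\/ inA11 J s A, inA12 J s A | inA2J J s A]) /\
  (forall A : seq (vec n), ~ (inA11 J s A /\ inA12 J s A)) /\
  (forall A : seq (vec n), ~ (inA11 J s A /\ inA2J J s A)) /\
  (forall A : seq (vec n), ~ (inA12 J s A /\ inA2J J s A)).
Proof.
move=> _ Hs; split; [|split; [|split]].
- move=> A UA; split; first by case=> _ SA HA Hab; apply: abelian_antichain_classes.
  case=> [[ii [jj [C E H]]] | [ii [jj [C E H]]] | H2].
  + by apply: (betas_abelian_antichain UA C E); rewrite H.
  + by apply: (betas_abelian_antichain UA C E); rewrite H orbT.
  + exact: alpha_betas_abelian_antichain.
- by move=> A [H11 H12]; apply: A11_A12_disjoint H11 H12.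
- by move=> A [[ii [jj [C E _]]] H2]; apply: A1_A2_disjoint C E H2.
- by move=> A [[ii [jj [C E _]]] H2]; apply: A1_A2_disjoint C E H2.
Qed.
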